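(* Let $v_{max}\in\mathbb{N}$, $V=\{1,\ldots,v_{max}\}$, $b>0$ and $K>0$. Let $f_{mort}:V\to(0,1)$ be any function, and let $f_{mut}:\{-v_{max},\ldots,0,\ldots,v_{max}\}\to[0,1]$ satisfy: $f_{mut}(-u)=f_{mut}(u)$ for all $u$; $u\mapsto f_{mut}(u)$ is decreasing for $u\geq 0$; and $\sum_{u=-v_{max}}^{v_{max}} f_{mut}(u)=1$. Let $P_0:V\to[0,\infty)$ and define $P_n:V\to[0,\infty)$ recursively by $$P_{n+1}(v)=(1-f_{mort}(v))P_n(v)+b\,(P_n\star f_{mut})(v)\left(1-\frac{\|P_n\|_1}{K}\right)\mathbf{1}_{[0,K]}(\|P_n\|_1),\qquad v=1,\ldots,v_{max},$$ where $(P_n\star f_{mut})(v)=\sum_{u=1}^{v_{max}}P_n(u)f_{mut}(v-u)$, $\|P_n\|_1=\sum_{v=1}^{v_{max}}P_n(v)$, and $\mathbf{1}_{[0,K]}$ is the indicator function of $[0,K]$. Define $F_{mut}(u)=\sum_{v=1}^{v_{max}}f_{mut}(v-u)$ for $u=1,\ldots,v_{max}$. If $$\|1-f_{mort}\|_\infty+b\|F_{mut}\|_\infty\leq 1,$$ where $\|1-f_{mort}\|_\infty=\max_{v\in V}(1-f_{mort}(v))$ and $\|F_{mut}\|_\infty=\max_u F_{mut}(u)$, then $\lim_{n\to\infty}\|P_n\|_1=0$.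
   Context: This is a discrete population model (a Verhulst-type model with a trait): $P_n(v)$ is the number of individuals in generation $n$ with trait value $v$, $b$ is the birth rate, $K$ the environmental capacity, $f_{mort}$ the trait-dependent mortality rate and $f_{mut}$ the mutation distribution. *)

From HB Require Import structures.
From mathcomp Require Import all_boot all_order all_algebra.
From mathcomp Require Import all_classical all_reals all_analysis.
Set Implicit Arguments. Unset Strict Implicit. Unset Printing Implicit Defensive.
Import Order.TTheory GRing.Theory Num.Theory.
Local Open Scope ring_scope.

(* Traits V = {1,...,vmax} are encoded by i : 'I_vmax, i.e. v = i + 1.
   Differences v - u of traits are unchanged by this shift. *)
Section Model.
Variables (R : realType) (vmax : nat).

Definition norm1 (P : 'I_vmax -> R) : R := \sum_(v < vmax) P v.

Definition conv (P : 'I_vmax -> R) (fmut : int -> R) (v : 'I_vmax) : R :=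
  \sum_(u < vmax) P u * fmut ((v : nat)%:Z - (u : nat)%:Z).

Definition indicator01K (K x : R) : R := if (0 <= x) && (x <= K) then 1 else 0.

Definition step (fmort : 'I_vmax -> R) (fmut : int -> R) (b K : R)
  (P : 'I_vmax -> R) : 'I_vmax -> R :=
  fun v => (1 - fmort v) * P v
           + b * conv P fmut v * (1 - norm1 P / K) * indicator01K K (norm1 P).

Definition Pseq fmort fmut b K (P0 : 'I_vmax -> R) (n : nat) : 'I_vmax -> R :=
  iter n (step fmort fmut b K) P0.

Definition Fmut (fmut : int -> R) (u : 'I_vmax) : R :=
  \sum_(v < vmax) fmut ((v : nat)%:Z - (u : nat)%:Z).

(* sup norms as finite maxima (all terms are nonnegative under the
   hypotheses, so the default 0 for the empty max is harmless) *)
Definition supnorm (f : 'I_vmax -> R) : R := \big[Order.max/0]_(v < vmax) f v.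

End Model.

(* Summing the recursion over v, the survivors keep at most the fraction
   q = max (1 - f_mort) < 1 of the mass x = ||P_n||_1, and births add at most
   b ||F_mut|| c x <= (1 - q) c x, where c = (1 - x/K) 1_[0,K](x) is the logistic factor.
   So each generation loses at least (1 - q) x (1 - c) >= (1 - q) min(x, x^2/K), an amount
   bounded away from 0 while x stays away from 0; hence x_n -> 0. *)
From Pilot Require Import Defs.
From HB Require Import structures.
From mathcomp Require Import all_boot all_order all_algebra.
From mathcomp Require Import all_classical all_reals all_analysis.
From mathcomp Require Import zify ring lra.
Import Order.TTheory GRing.Theory Num.Theory.
Local Open Scope classical_set_scope.
Local Open Scope ring_scope.

Lemma cvg0_of_decrement {R : realType} (u : R ^nat) (phi : R -> R) :
  (forall n, 0 <= u n) ->
  0 <= phi 0 ->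
  (forall x y, 0 <= x -> x <= y -> phi x <= phi y) ->
  (forall x, 0 < x -> 0 < phi x) ->
  (forall n, u n.+1 <= u n - phi (u n)) ->
  u n @[n --> \oo] --> 0.
Proof.
move=> u_ge0 phi0_ge0 phi_mono phi_gt0 u_step.
have u_decr : nonincreasing_seq u.
  apply/nonincreasing_seqP => n; apply: le_trans (u_step n) _.
  by rewrite lerBlDr lerDl (le_trans phi0_ge0) ?phi_mono.
apply/cvgrPdist_lt => e e_gt0.
have d_gt0 := phi_gt0 e e_gt0.
have below_or_drop n : u n < e \/ u n <= u 0%N - n%:R * phi e.
  elim: n => [|n [IH|IH]]; first by right; rewrite mul0r subr0.
  - by left; apply: le_lt_trans IH; apply: u_decr.
  - have [u_lt|e_le] := ltP (u n) e.
      by left; apply: le_lt_trans u_lt; apply: u_decr.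
    right; have := u_step n; have := phi_mono _ _ (ltW e_gt0) e_le.
    rewrite -natr1; lra.
pose M := Num.Def.archi_bound (u 0%N / phi e).
have u0_lt : u 0%N < M%:R * phi e.
  by rewrite -ltr_pdivrMr // archi_boundP // divr_ge0 // ltW.
have uM_lt : u M < e.
  by case: (below_or_drop M) => // uM_le; have := u_ge0 M; lra.
exists M => // n /= Mn.
rewrite sub0r normrN ger0_norm //.
by apply: le_lt_trans uM_lt; apply: u_decr.
Qed.

Lemma norm1_ge0 {R : realType} {vmax : nat} {P : 'I_vmax -> R} :
  (forall v, 0 <= P v) -> 0 <= norm1 P.
Proof. by move=> P_ge0; apply: sumr_ge0. Qed.

Section Model.
Variables (R : realType) (vmax : nat) (b K : R)
  (fmort : 'I_vmax -> R) (fmut : int -> R).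
Hypotheses (b_gt0 : 0 < b) (K_gt0 : 0 < K) (fmort_01 : forall v, 0 < fmort v < 1)
  (fmut_01 : forall u : int, `|u| <= (vmax : nat)%:Z -> 0 <= fmut u <= 1).

Local Notation step := (step fmort fmut b K).

Definition logistic (P : 'I_vmax -> R) : R :=
  (1 - norm1 P / K) * indicator01K K (norm1 P).

Lemma fmut_sub_ge0 (v u : 'I_vmax) : 0 <= fmut ((v : nat)%:Z - (u : nat)%:Z).
Proof.
have /fmut_01/andP[] // : `|(v : nat)%:Z - (u : nat)%:Z| <= (vmax : nat)%:Z.
by move: (ltn_ord v) (ltn_ord u) => v_lt u_lt; rewrite ler_norml; apply/andP; split; lia.
Qed.

Lemma logistic_ge0 (P : 'I_vmax -> R) : 0 <= logistic P.
Proof.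
rewrite /logistic /indicator01K; case: ifP => [/andP[_ N_le]|_]; last by rewrite mulr0.
by rewrite mulr1 subr_ge0 ler_pdivrMr // mul1r.
Qed.

Lemma min_le_norm1_logistic (P : 'I_vmax -> R) : 0 <= norm1 P ->
  Order.min (norm1 P) (norm1 P ^+ 2 / K) <= norm1 P * (1 - logistic P).
Proof.
move=> N_ge0; rewrite ge_min /logistic /indicator01K.
case: ifP => _; last by rewrite mulr0 subr0 mulr1 lexx.
suff -> : norm1 P * (1 - (1 - norm1 P / K) * 1) = norm1 P ^+ 2 / K by rewrite lexx orbT.
by rewrite mulr1 subKr expr2 mulrA.
Qed.

Lemma norm1_step (P : 'I_vmax -> R) : norm1 (step P) =
  \sum_(u < vmax) P u * ((1 - fmort u) + b * logistic P * Fmut fmut u).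
Proof.
rewrite /norm1 /step big_split /=.
under [RHS]eq_bigr do rewrite mulrDr.
rewrite big_split /=; congr (_ + _); first by apply: eq_bigr => i _; ring.
rewrite (eq_bigr (fun v => b * logistic P * Defs.conv P fmut v)); last first.
  by move=> v _; rewrite /logistic; ring.
rewrite -mulr_sumr /Defs.conv exchange_big mulr_sumr; apply: eq_bigr => u _.
rewrite /Fmut /logistic !mulr_sumr; apply: eq_bigr => v _; ring.
Qed.

Lemma step_ge0 (P : 'I_vmax -> R) : (forall v, 0 <= P v) -> forall v, 0 <= step P v.
Proof.
move=> P_ge0 v; rewrite /step; apply: addr_ge0.
  by rewrite mulr_ge0 // subr_ge0; case/andP: (fmort_01 v) => _ /ltW.
rewrite -mulrA -/(logistic P) mulr_ge0 ?logistic_ge0 // mulr_ge0 ?(ltW b_gt0) //.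
by apply: sumr_ge0 => u _; rewrite mulr_ge0 ?fmut_sub_ge0.
Qed.

Lemma Pseq_ge0 (P0 : 'I_vmax -> R) n :
  (forall v, 0 <= P0 v) -> forall v, 0 <= Pseq fmort fmut b K P0 n v.
Proof. by move=> P0_ge0; elim: n => [|n IH] //=; apply: step_ge0. Qed.

Local Notation surv := (supnorm (fun v : 'I_vmax => 1 - fmort v)).

Hypothesis growth_le1 : surv + b * supnorm (@Fmut R vmax fmut) <= 1.

Lemma one_sub_surv_gt0 : 0 < 1 - surv.
Proof.
rewrite subr_gt0; apply: bigmax_lt => // v _.
by rewrite ltrBlDr ltrDl; case/andP: (fmort_01 v).
Qed.

Lemma growth_factor_le (P : 'I_vmax -> R) u :
  (1 - fmort u) + b * logistic P * Fmut fmut u <= surv + (1 - surv) * logistic P.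
Proof.
have mort_le : 1 - fmort u <= surv by apply: (le_bigmax _ (fun v => 1 - fmort v)).
have Fmut_le : Fmut fmut u <= supnorm (@Fmut R vmax fmut) by apply: le_bigmax.
have c_ge0 := logistic_ge0 P.
have := ler_wpM2l (mulr_ge0 (ltW b_gt0) c_ge0) Fmut_le.
have : logistic P * (b * supnorm (@Fmut R vmax fmut)) <= logistic P * (1 - surv).
  by rewrite ler_wpM2l // lerBrDl.
nra.
Qed.

Definition decrement (x : R) : R := (1 - surv) * Order.min x (x ^+ 2 / K).

Lemma norm1_step_le (P : 'I_vmax -> R) : (forall v, 0 <= P v) ->
  norm1 (step P) <= norm1 P - decrement (norm1 P).
Proof.
move=> P_ge0; have N_ge0 := norm1_ge0 P_ge0.
have : norm1 (step P) <= norm1 P * (surv + (1 - surv) * logistic P).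
  rewrite norm1_step /norm1 mulr_suml; apply: ler_sum => u _.
  by rewrite ler_wpM2l ?growth_factor_le.
have := ler_wpM2l (ltW one_sub_surv_gt0) (min_le_norm1_logistic P N_ge0).
rewrite /decrement; nra.
Qed.

Lemma decrement_mono x y : 0 <= x -> x <= y -> decrement x <= decrement y.
Proof.
move=> x_ge0 xy; rewrite ler_wpM2l ?(ltW one_sub_surv_gt0) // le_min2 //.
by rewrite ler_pM2r ?invr_gt0 // ler_pXn2r // nnegrE (le_trans x_ge0).
Qed.

Lemma decrement_gt0 x : 0 < x -> 0 < decrement x.
Proof.
by move=> x_gt0; rewrite mulr_gt0 ?one_sub_surv_gt0 // lt_min x_gt0 divr_gt0 ?exprn_gt0.
Qed.

Lemma norm1_Pseq_cvg0 (P0 : 'I_vmax -> R) : (forall v, 0 <= P0 v) ->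
  norm1 (Pseq fmort fmut b K P0 n) @[n --> \oo] --> 0.
Proof.
move=> P0_ge0; apply: (cvg0_of_decrement _ decrement).
- by move=> n; apply/norm1_ge0/Pseq_ge0.
- by rewrite /decrement expr0n /= mul0r minxx mulr0.
- exact: decrement_mono.
- exact: decrement_gt0.
- by move=> n; apply/norm1_step_le/Pseq_ge0.
Qed.

End Model.

Theorem theorem2p2 (R : realType) (vmax : nat) (b K : R)
  (fmort : 'I_vmax -> R) (fmut : int -> R) (P0 : 'I_vmax -> R) :
  0 < b -> 0 < K ->
  (forall v, 0 < fmort v < 1) ->
  (forall u : int, `|u| <= (vmax : nat)%:Z -> 0 <= fmut u <= 1) ->
  (forall u : int, `|u| <= (vmax : nat)%:Z -> fmut (- u) = fmut u) ->
  (forall u1 u2 : int, 0 <= u1 -> u1 <= u2 -> u2 <= (vmax : nat)%:Z ->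
     fmut u2 <= fmut u1) ->
  \sum_(i < (vmax + vmax).+1) fmut ((i : nat)%:Z - (vmax : nat)%:Z) = 1 ->
  (forall v, 0 <= P0 v) ->
  supnorm (fun v : 'I_vmax => 1 - fmort v) + b * supnorm (@Fmut R vmax fmut) <= 1 ->
  norm1 (Pseq fmort fmut b K P0 n) @[n --> \oo] --> 0.
Proof.
move=> b_gt0 K_gt0 fmort_01 fmut_01 _ _ _ P0_ge0 growth_le1.
exact: norm1_Pseq_cvg0.
Qed.
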